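(* Let $G=(V,E,w)$ be an undirected graph on $n$ nodes with positive edge weights, let $k$ be an integer with $1\le k\le n$, and let $\mathbf{A}\in\{\mathbf{A}_D,\mathbf{A}_P\}$. Let $c\in[0,1)$ and $\boldsymbol{\epsilon}\in[-c,1-c]^n$, and let the innate opinions be $\mathbf{s}_0=c\mathbf{1}+\boldsymbol{\epsilon}$. Let $\gamma_1,\gamma_2,\gamma_3\in(0,1)$ and assume that for all sets $X\subseteq V$ with $|X|=k$: (1) $(\mathbf{s}_X-\mathbf{s}_0)^{\intercal}\mathbf{A}\mathbf{s}_0\ge-\gamma_1\,\mathbf{s}_0^{\intercal}\mathbf{A}\mathbf{s}_0$; (2) $\boldsymbol{\epsilon}_{|X}^{\intercal}\mathbf{A}\boldsymbol{\epsilon}_{|X}\le\gamma_2\,\mathbf{s}_0^{\intercal}\mathbf{A}\mathbf{s}_0$; (3) $|\boldsymbol{\epsilon}_{|X}^{\intercal}\mathbf{A}\mathbf{1}_{|X}|\le\gamma_3\,\mathbf{s}_0^{\intercal}\mathbf{A}\mathbf{s}_0$. Suppose we have access to a $\beta$-approximation algorithm for the limited-information problem (L) below. Then one can compute a feasible solution for the full-information problem (F) below whose objective value is at least $\frac14\min\left\{\beta,\frac{1-2\gamma_1-2(1-c)\gamma_3}{1+2(1-c)\gamma_3+\gamma_2}\right\}$ times the optimal value of (F), using only the graph $G$ (and $k$) but not the opinions $\mathbf{s}_0$.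
   Context: $\mathbf{L}$ is the Laplacian of $G$ ($\mathbf{L}=\mathbf{D}-\mathbf{W}$ with $\mathbf{W}$ the weighted adjacency matrix and $\mathbf{D}$ the diagonal weighted degree matrix), $\mathbf{A}_D=(\mathbf{L}+\mathbf{I})^{-1}\mathbf{L}(\mathbf{L}+\mathbf{I})^{-1}$ (disagreement) and $\mathbf{A}_P=(\mathbf{I}+\mathbf{L})^{-1}(\mathbf{I}-\frac{\mathbf{1}\mathbf{1}^{\intercal}}{n})(\mathbf{I}+\mathbf{L})^{-1}$ (polarization); $\mathbf{1}$ is the all-ones vector. For $X\subseteq V$, $\mathbf{s}_X\in[0,1]^n$ is given by $\mathbf{s}_X(u)=1$ if $u\in X$ and $\mathbf{s}_X(u)=\mathbf{s}_0(u)$ otherwise; for a vector $\mathbf{v}$, $\mathbf{v}_{|X}(u)=\mathbf{v}(u)$ if $u\in X$ and $0$ otherwise. Problem (F) (full information; input $G$, $\mathbf{s}_0$, $k$): maximize $\mathbf{s}^{\intercal}\mathbf{A}\mathbf{s}$ subject to $\|\mathbf{s}-\mathbf{s}_0\|_0=k$ and $\mathbf{s}(u)\in\{\mathbf{s}_0(u),1\}$ for all $u\in V$. Problem (L) (limited information; input $G$, $k$): maximize $\mathbf{s}^{\intercal}\mathbf{A}\mathbf{s}$ subject to $\|\mathbf{s}\|_0=k$ and $\mathbf{s}\in[0,1]^n$. A $\beta$-approximation algorithm ($\beta\in(0,1]$) for (L) outputs a set $X\subseteq V$ with $|X|=k$ whose indicator vector $\mathbf{1}_{|X}$ attains value at least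 $\beta$ times the optimum of (L). *)

From HB Require Import structures.
From mathcomp Require Import all_boot all_order all_algebra.
Set Implicit Arguments. Unset Strict Implicit. Unset Printing Implicit Defensive.
Import Order.TTheory GRing.Theory Num.Theory.
Local Open Scope ring_scope.

Section Defs.
Variables (R : realFieldType) (n : nat).

(* A weighted undirected graph on vertex set 'I_n is given by its weighted
   adjacency matrix W: symmetric, nonnegative entries (edges = positive
   entries), no self-loops. *)
Definition weighted_graph (W : 'M[R]_n) : Prop :=
  [/\ W^T = W, forall i j, 0 <= W i j & forall i, W i i = 0].

Definition degmx (W : 'M[R]_n) : 'M[R]_n :=
  diag_mx (\row_i \sum_j W i j).
Definition laplacian (W : 'M[R]_n) : 'M[R]_n := degmx W - W.

Definition AD (W : 'M[R]_n) : 'M[R]_n :=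
  invmx (laplacian W + 1%:M) *m laplacian W *m invmx (laplacian W + 1%:M).

Definition AP (W : 'M[R]_n) : 'M[R]_n :=
  invmx (1%:M + laplacian W) *m (1%:M - (n%:R)^-1 *: const_mx 1)
        *m invmx (1%:M + laplacian W).

Definition qf (A : 'M[R]_n) (s : 'cV[R]_n) : R := (s^T *m A *m s) 0 0.
Definition bf (u : 'cV[R]_n) (A : 'M[R]_n) (v : 'cV[R]_n) : R :=
  (u^T *m A *m v) 0 0.

Definition ones : 'cV[R]_n := const_mx 1.

Definition l0 (s : 'cV[R]_n) : nat := #|[set i | s i 0 != 0]|.

Definition sX (s0 : 'cV[R]_n) (X : {set 'I_n}) : 'cV[R]_n :=
  \col_i (if i \in X then 1 else s0 i 0).

Definition restr (v : 'cV[R]_n) (X : {set 'I_n}) : 'cV[R]_n :=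
  \col_i (if i \in X then v i 0 else 0).

(* X is the output of a beta-approximation algorithm for (L):
   |X| = k and 1_{|X}^T A 1_{|X} >= beta * s^T A s for every feasible s of (L),
   i.e. >= beta * OPT(L). *)
Definition approx_L (A : 'M[R]_n) (k : nat) (beta : R) (X : {set 'I_n}) : Prop :=
  #|X| = k /\
  forall s : 'cV[R]_n, (forall i, 0 <= s i 0 <= 1) -> l0 s = k ->
    beta * qf A s <= qf A (restr ones X).

End Defs.

From HB Require Import structures.
From mathcomp Require Import all_boot all_order all_algebra.
From mathcomp Require Import ring lra.
Import Order.TTheory GRing.Theory Num.Theory.
Set Implicit Arguments. Unset Strict Implicit. Unset Printing Implicit Defensive.
Local Open Scope ring_scope.

(* Both A_D and A_P are symmetric positive semidefinite: each is a symmetric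
   matrix M B M with B the Laplacian or the centering matrix.  Write
   a = s_0^T A s_0, q_Z = 1_{|Z}^T A 1_{|Z} and
   s_Z - s_0 = (1 - c) 1_{|Z} - eps_{|Z}.  Expanding the quadratic form around
   s_0, hypotheses (1) and (3) give the lower bound
     s_X^T A s_X >= (1 - 2 g1 - 2 (1 - c) g3) a + (1 - c)^2 q_X,
   while (u + v)^T A (u + v) <= 2 u^T A u + 2 v^T A v and hypotheses (2)
   and (3) give the upper bound
     s_Y^T A s_Y <= 2 ((1 + 2 (1 - c) g3 + g2) a + (1 - c)^2 q_Y).
   Since 1_{|Y} is feasible for (L), the beta-approximate X has
   beta q_Y <= q_X, and comparing the two bounds term by term yields the
   claim, even with 1/2 in place of 1/4. *)

Section QuadraticForms.
Variables (R : realFieldType) (n : nat).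
Implicit Types (A B M : 'M[R]_n) (u v x : 'cV[R]_n).

Lemma bfDl u v x A : bf (u + v) A x = bf u A x + bf v A x.
Proof. by rewrite /bf linearD /= !mulmxDl mxE. Qed.

Lemma bfDr u v x A : bf x A (u + v) = bf x A u + bf x A v.
Proof. by rewrite /bf mulmxDr mxE. Qed.

Lemma bfZl a u x A : bf (a *: u) A x = a * bf u A x.
Proof. by rewrite /bf linearZ /= -!scalemxAl mxE. Qed.

Lemma bfZr a u x A : bf x A (a *: u) = a * bf x A u.
Proof. by rewrite /bf -scalemxAr mxE. Qed.

Lemma bfNl u x A : bf (- u) A x = - bf u A x.
Proof. by rewrite -scaleN1r bfZl mulN1r. Qed.

Lemma bfNr u x A : bf x A (- u) = - bf x A u.
Proof. by rewrite -scaleN1r bfZr mulN1r. Qed.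

Lemma bfC u v A : A^T = A -> bf u A v = bf v A u.
Proof.
move=> sA; rewrite /bf.
transitivity ((u^T *m A *m v)^T 0 0); first by rewrite [RHS]mxE.
by rewrite !trmx_mul sA trmxK mulmxA.
Qed.

Lemma qfD A u v : A^T = A -> qf A (u + v) = qf A u + 2 * bf u A v + qf A v.
Proof.
by move=> sA; rewrite /qf -!/(bf _ _ _) bfDl !bfDr (bfC v u sA); ring.
Qed.

Lemma qfB A a u v : A^T = A ->
  qf A (a *: u - v) = a ^+ 2 * qf A u - 2 * a * bf v A u + qf A v.
Proof.
move=> sA; rewrite /qf -!/(bf _ _ _) bfDl !bfDr !bfNl !bfNr !bfZl !bfZr.
by rewrite (bfC u v sA); ring.
Qed.

Lemma qf_expand A s t : A^T = A ->
  qf A t = qf A s + 2 * bf (t - s) A s + qf A (t - s).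
Proof. by move=> sA; rewrite -[in LHS](subrK s t) [LHS]qfD //; ring. Qed.

Lemma qf_sum A x : qf A x = \sum_j \sum_i x i 0 * A i j * x j 0.
Proof.
rewrite /qf mxE; apply: eq_bigr => j _; rewrite mxE mulr_suml.
by apply: eq_bigr => i _; rewrite mxE.
Qed.

Definition psdmx A := forall x, 0 <= qf A x.

Lemma psdmx_qfD_le A u v : A^T = A -> psdmx A ->
  qf A (u + v) <= 2 * qf A u + 2 * qf A v.
Proof.
move=> sA psdA; have := psdA (1 *: u - v).
by rewrite qfB // qfD // expr1n !mul1r (bfC u v sA); lra.
Qed.

Lemma trmx_sandwich M B : M^T = M -> B^T = B -> (M *m B *m M)^T = M *m B *m M.
Proof. by move=> sM sB; rewrite !trmx_mul sM sB mulmxA. Qed.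

Lemma psdmx_sandwich M B : M^T = M -> psdmx B -> psdmx (M *m B *m M).
Proof.
by move=> sM psdB x; have := psdB (M *m x); rewrite /qf trmx_mul sM !mulmxA.
Qed.

End QuadraticForms.

Section OpinionMatrices.
Variables (R : realFieldType) (n : nat).

Definition centering : 'M[R]_n := 1%:M - (n%:R)^-1 *: const_mx 1.

Lemma centering_sym : centering^T = centering.
Proof. by rewrite /centering linearB linearZ /= tr_scalar_mx trmx_const. Qed.

Lemma qf_centering x :
  qf centering x = \sum_j x j 0 ^+ 2 - (n%:R)^-1 * (\sum_j x j 0) ^+ 2.
Proof.
set S := \sum_j x j 0.
have -> : (n%:R)^-1 * S ^+ 2 = \sum_j x j 0 * ((n%:R)^-1 * S).
  by rewrite -mulr_suml -/S; ring.
rewrite qf_sum -sumrB; apply: eq_bigr => j _.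
under eq_bigr => i _ do rewrite /centering !mxE mulrBr mulrBl.
rewrite sumrB (bigD1 j) //= big1 => [|i /negbTE ->]; last first.
  by rewrite mulr0 mul0r.
by rewrite eqxx mulr1n addr0 -!mulr_suml -/S; ring.
Qed.

Lemma centering_psd : psdmx centering.
Proof.
move=> x; rewrite qf_centering; set S := \sum_j x j 0.
have [n0|n0] := eqVneq n 0%N.
  have -> : (n%:R : R) = 0 by rewrite n0.
  by rewrite invr0 mul0r subr0; apply: sumr_ge0 => j _; apply: sqr_ge0.
have nz : (n%:R : R) != 0 by rewrite pnatr_eq0.
have <- : \sum_j (x j 0 - S / n%:R) ^+ 2 = \sum_j x j 0 ^+ 2 - n%:R^-1 * S ^+ 2.
  under eq_bigr => j _ do rewrite sqrrB.
  rewrite big_split /= sumrB sumrMnl -mulr_suml -/S sumr_const card_ord.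
  by rewrite -[_ *+ n]mulr_natr -[_ *+ 2]mulr_natr; field.
by apply: sumr_ge0 => j _; apply: sqr_ge0.
Qed.

Variable W : 'M[R]_n.
Hypothesis gW : weighted_graph W.

Lemma laplacian_sym : (laplacian W)^T = laplacian W.
Proof. by case: gW => sW _ _; rewrite /laplacian linearB /= tr_diag_mx sW. Qed.

Lemma qf_laplacian x :
  qf (laplacian W) x *+ 2 = \sum_i \sum_j W i j * (x i 0 - x j 0) ^+ 2.
Proof.
case: gW => sW _ _; have sWij i j : W j i = W i j by rewrite -[in LHS]sW mxE.
pose T := \sum_i \sum_j W i j * (x i 0 ^+ 2 - x i 0 * x j 0).
have -> : qf (laplacian W) x = T.
  rewrite qf_sum; apply: eq_bigr => i _.
  under eq_bigr => j _ do rewrite /laplacian /degmx !mxE mulrBr mulrBl.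
  rewrite sumrB (bigD1 i) //= [X in _ + X - _]big1 => [|j /negbTE ->];
    last first.
    by rewrite mulr0n mulr0 mul0r.
  rewrite eqxx mulr1n addr0 mulr_sumr mulr_suml -sumrB.
  by apply: eq_bigr => j _; rewrite sWij; ring.
have T_swap : T = \sum_i \sum_j W i j * (x j 0 ^+ 2 - x j 0 * x i 0).
  rewrite /T exchange_big /=; apply: eq_bigr => i _.
  by apply: eq_bigr => j _; rewrite sWij.
rewrite mulr2n {1}T_swap /T -big_split; apply: eq_bigr => i _.
by rewrite -big_split; apply: eq_bigr => j _ /=; ring.
Qed.

Lemma laplacian_psd : psdmx (laplacian W).
Proof.
case: gW => _ W_ge0 _ x; rewrite -(pmulrn_lge0 _ (ltn0Sn 1)) qf_laplacian.
by apply: sumr_ge0 => i _; apply: sumr_ge0 => j _; rewrite mulr_ge0 ?sqr_ge0.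
Qed.

Lemma resolvent_sym :
  (invmx (laplacian W + 1%:M))^T = invmx (laplacian W + 1%:M).
Proof. by rewrite trmx_inv linearD /= laplacian_sym tr_scalar_mx. Qed.

Lemma AD_sym : (AD W)^T = AD W.
Proof. by rewrite trmx_sandwich ?resolvent_sym ?laplacian_sym. Qed.

Lemma AD_psd : psdmx (AD W).
Proof.
by apply: psdmx_sandwich; [apply: resolvent_sym | apply: laplacian_psd].
Qed.

Lemma AP_sym : (AP W)^T = AP W.
Proof.
by rewrite /AP addrC -/centering trmx_sandwich ?resolvent_sym ?centering_sym.
Qed.

Lemma AP_psd : psdmx (AP W).
Proof.
rewrite /AP addrC -/centering.
by apply: psdmx_sandwich; [apply: resolvent_sym | apply: centering_psd].
Qed.

End OpinionMatrices.

Section InnateOpinions.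
Variables (R : realFieldType) (n : nat) (A : 'M[R]_n) (c : R) (eps : 'cV[R]_n).
Hypotheses (sA : A^T = A) (psdA : psdmx A) (c_le1 : c <= 1).
Let s0 := c *: ones R n + eps.

Lemma sX_sub_innate Z :
  sX s0 Z - s0 = (1 - c) *: restr (ones R n) Z - restr eps Z.
Proof.
by apply/matrixP => i j; rewrite (ord1 j) !mxE; case: (i \in Z) => /=; ring.
Qed.

Lemma qf_sX_lower g1 g3 X :
  - g1 * qf A s0 <= bf (sX s0 X - s0) A s0 ->
  `|bf (restr eps X) A (restr (ones R n) X)| <= g3 * qf A s0 ->
  (1 - 2 * g1 - 2 * (1 - c) * g3) * qf A s0
    + (1 - c) ^+ 2 * qf A (restr (ones R n) X) <= qf A (sX s0 X).
Proof.
move=> h1 h3; rewrite [qf A (sX s0 X)](qf_expand s0) // sX_sub_innate qfB //.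
rewrite sX_sub_innate in h1.
have tX_le : (1 - c) * bf (restr eps X) A (restr (ones R n) X)
              <= (1 - c) * (g3 * qf A s0).
  by rewrite ler_wpM2l ?subr_ge0 // (le_trans (ler_norm _) h3).
have := psdA (restr eps X); lra.
Qed.

Lemma qf_sX_upper g2 g3 Y :
  qf A (restr eps Y) <= g2 * qf A s0 ->
  `|bf (restr eps Y) A (restr (ones R n) Y)| <= g3 * qf A s0 ->
  qf A (sX s0 Y)
    <= 2 * ((1 + 2 * (1 - c) * g3 + g2) * qf A s0
            + (1 - c) ^+ 2 * qf A (restr (ones R n) Y)).
Proof.
move=> h2 h3; rewrite -[sX s0 Y](subrK s0).
apply: le_trans (psdmx_qfD_le _ _ sA psdA) _.
rewrite sX_sub_innate qfB //.
have tY_le : - ((1 - c) * bf (restr eps Y) A (restr (ones R n) Y))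
           <= (1 - c) * (g3 * qf A s0).
  by rewrite -mulrN ler_wpM2l ?subr_ge0 // (le_trans _ h3) // -normrN ler_norm.
lra.
Qed.

End InnateOpinions.

Lemma l0_restr_ones (R : realFieldType) n (Y : {set 'I_n}) :
  l0 (restr (ones R n) Y) = #|Y|.
Proof.
apply: eq_card => i; rewrite !inE !mxE.
by case: (i \in Y); rewrite ?oner_neq0 ?eqxx.
Qed.

Lemma approx_L_restr_ones (R : realFieldType) n (A : 'M[R]_n) k beta
    (X Y : {set 'I_n}) :
  approx_L A k beta X -> #|Y| = k ->
  beta * qf A (restr (ones R n) Y) <= qf A (restr (ones R n) X).
Proof.
case=> _ apX cardY; apply: apX; last by rewrite l0_restr_ones.
by move=> i; rewrite !mxE; case: (i \in Y); rewrite ?lexx ?ler01.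
Qed.

Lemma approx_ratio_le (R : realFieldType) (beta P Q a bX bY vX vY : R) :
  0 < beta -> 0 < Q -> 0 <= a -> 0 <= bY -> 0 <= vX -> 0 <= vY ->
  beta * bY <= bX -> P * a + bX <= vX -> vY <= 2 * (Q * a + bY) ->
  4^-1 * Num.min beta (P / Q) * vY <= vX.
Proof.
move=> b0 Q0 a0 bY0 vX0 vY0 hb hX hY; set m := Num.min beta (P / Q).
have [m_le0|m_gt0] := lerP m 0.
  have : m * vY <= 0 by apply: mulr_le0_ge0.
  lra.
have mQ_le : m * Q <= P by rewrite -ler_pdivlMr // ge_min lexx orbT.
have m_le : m <= beta by rewrite ge_min lexx.
have : m * vY <= m * (2 * (Q * a + bY)) by rewrite ler_wpM2l // ltW.
have : (m * Q) * a <= P * a by rewrite ler_wpM2r.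
have : m * bY <= beta * bY by rewrite ler_wpM2r.
lra.
Qed.

Theorem theorem3p1 (R : realFieldType) (n : nat) (W : 'M[R]_n) (k : nat)
  (A : 'M[R]_n) (c : R) (eps : 'cV[R]_n) (g1 g2 g3 beta : R) :
  weighted_graph W ->
  (1 <= k <= n)%N ->
  (A = AD W \/ A = AP W) ->
  0 <= c < 1 ->
  (forall i, - c <= eps i 0 <= 1 - c) ->
  0 < g1 < 1 -> 0 < g2 < 1 -> 0 < g3 < 1 ->
  0 < beta <= 1 ->
  let s0 := c *: ones R n + eps in
  (forall X : {set 'I_n}, #|X| = k ->
     [/\ bf (sX s0 X - s0) A s0 >= - g1 * qf A s0,
         qf A (restr eps X) <= g2 * qf A s0
       & `|bf (restr eps X) A (restr (ones R n) X)| <= g3 * qf A s0]) ->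
  forall X : {set 'I_n}, approx_L A k beta X ->
  forall Y : {set 'I_n}, #|Y| = k ->
    4^-1 * Num.min beta
      ((1 - 2 * g1 - 2 * (1 - c) * g3) / (1 + 2 * (1 - c) * g3 + g2))
      * qf A (sX s0 Y)
    <= qf A (sX s0 X).
Proof.
move=> gW _ hA /andP[_ c_lt1] _ _ /andP[g20 _] /andP[g30 _] /andP[b0 _] s0 hyp
  X apX Y cardY.
have [sA psdA] : A^T = A /\ psdmx A.
  by case: hA => ->; split;
    [apply: AD_sym | apply: AD_psd | apply: AP_sym | apply: AP_psd].
have [hX1 _ hX3] := hyp X apX.1.
have [_ hY2 hY3] := hyp Y cardY.
have c_le1 : c <= 1 by apply: ltW.
apply: (approx_ratio_le (a := qf A s0)
  (bX := (1 - c) ^+ 2 * qf A (restr (ones R n) X))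
  (bY := (1 - c) ^+ 2 * qf A (restr (ones R n) Y))).
- exact: b0.
- have : 0 <= (1 - c) * g3 by rewrite mulr_ge0 ?subr_ge0 ?ltW.
  lra.
- exact: psdA.
- by rewrite mulr_ge0 ?sqr_ge0.
- exact: psdA.
- exact: psdA.
- by rewrite mulrCA ler_wpM2l ?sqr_ge0 // (approx_L_restr_ones apX).
- exact: qf_sX_lower.
- exact: qf_sX_upper.
Qed.
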